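(* Let $X$ be a set, let $T:\mathcal P(X)\to\mathcal P(X)$ be an order reversing quasi involution, and let $X_0=\{x\in X:\ x\in T(\{x\})\}$. Let $K_0\subseteq X$ satisfy $K_0\subseteq TK_0$. Then there exists $K\subseteq X$ with $K_0\subseteq K$ and $TK\cap X_0=K$. In particular, if $X=X_0$, then for every $x_0\in X$ there exists $K\subseteq X$ with $x_0\in K=TK$.
   Context: $\mathcal P(X)$ denotes the power set of $X$. A map $T:\mathcal P(X)\to\mathcal P(X)$ is an order reversing quasi involution if for all $K,L\subseteq X$: (i) $K\subseteq TTK$, and (ii) $L\subseteq K$ implies $TK\subseteq TL$. *)

From mathcomp Require Import all_boot.
From mathcomp Require Import boolp classical_sets.
Set Implicit Arguments. Unset Strict Implicit. Unset Printing Implicit Defensive.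
Local Open Scope classical_set_scope.

Definition order_reversing_quasi_involution (X : Type) (T : set X -> set X) : Prop :=
  (forall K : set X, K `<=` T (T K)) /\
  (forall K L : set X, L `<=` K -> T K `<=` T L).

Definition X0 (X : Type) (T : set X -> set X) : set X :=
  [set x | T [set x] x].

From mathcomp Require Import all_boot.
From mathcomp Require Import boolp classical_sets.
Set Implicit Arguments. Unset Strict Implicit. Unset Printing Implicit Defensive.
Local Open Scope classical_set_scope.

(* For an order reversing quasi involution, [T K] is the polar of [K] for the
   symmetric relation "[y] lies in [T [set x]]"; hence [K `<=` T K] (isotropy)
   says that the points of [K] are pairwise related, each to itself as well,
   i.e. [K `<=` X0 T].  Being a condition on pairs, isotropy survives unions of
   chains, so Zorn's lemma extends [K0] to a maximal isotropic [K].  A point of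
   [T K `&` X0 T] can be added to [K] keeping it isotropic, so it lies in [K]. *)

Section QuasiInvolution.
Variables (X : Type) (T : set X -> set X).
Hypothesis HT : order_reversing_quasi_involution T.

Lemma T_set1P K x : T K x <-> K `<=` T [set x].
Proof.
have [TTK antiT] := HT; split=> [TKx | /antiT TxK].
- by apply: subset_trans (TTK K) (antiT _ _ _) => y ->.
- exact/TxK/TTK.
Qed.

Lemma T_set1C x y : T [set x] y <-> T [set y] x.
Proof. by rewrite (propext (T_set1P _ _)); split=> [/(_ x erefl) | Tyx z ->]. Qed.

Lemma TP K x : T K x <-> forall y, K y -> T [set y] x.
Proof.
rewrite (propext (T_set1P _ _)).
by split=> TK y /TK; rewrite (propext (T_set1C _ _)).
Qed.

Definition isotropic (K : set X) := K `<=` T K.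

Lemma isotropicP K : isotropic K <-> forall x y, K x -> K y -> T [set y] x.
Proof.
split=> [isoK x y /isoK /TP | isoK x Kx]; first exact.
by apply/TP => y; exact: isoK.
Qed.

Lemma isotropic_sub_X0 K : isotropic K -> K `<=` X0 T.
Proof. by move=> /isotropicP isoK x Kx; exact: isoK. Qed.

Lemma isotropic_setU1 K x : isotropic K -> T K x -> X0 T x -> isotropic (x |` K).
Proof.
move=> /isotropicP isoK /TP TKx X0x; apply/isotropicP.
move=> y z [->|Ky] [->|Kz] //; last exact: isoK.
- exact: TKx.
- exact/T_set1C/TKx.
Qed.

Lemma isotropic_chain_bigcup K0 (F : set (set X)) :
  isotropic K0 -> (forall A, F A -> isotropic (K0 `|` A)) -> total_on F subset ->
  isotropic (K0 `|` \bigcup_(A in F) A).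
Proof.
move=> /isotropicP isoK0 isoF totF; apply/isotropicP.
have isoFP A x y : F A -> (K0 `|` A) x -> (K0 `|` A) y -> T [set y] x.
  by move=> /isoF /isotropicP; apply.
move=> x y [K0x | [A FA Ax]] [K0y | [B FB By]].
- exact: isoK0.
- by apply: (isoFP B); [| left | right].
- by apply: (isoFP A); [| right | left].
- have [AB | BA] := totF A B FA FB.
  + by apply: (isoFP B); [| right; exact: AB | right].
  + by apply: (isoFP A); [| right | right; exact: BA].
Qed.

Lemma exists_maximal_isotropic K0 : isotropic K0 ->
  exists K, [/\ K0 `<=` K, isotropic K & forall x, isotropic (x |` K) -> K x].
Proof.
move=> isoK0.
have [A [isoA Amax]] := Zorn_bigcup (P := [set A | isotropic (K0 `|` A)])
  (fun F FP totF => isotropic_chain_bigcup isoK0 FP totF).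
exists (K0 `|` A); split=> [||x isox]; [exact: subsetUl | exact: isoA |].
apply: contrapT => Kx; apply: (Amax (x |` (K0 `|` A))).
- split=> [y Ay | AK]; first by right; right.
  by apply: Kx; right; apply: AK; left.
- by rewrite /= setUidr // => y K0y; right; left.
Qed.

Lemma maximal_isotropic_fixpoint K : isotropic K ->
  (forall x, isotropic (x |` K) -> K x) -> T K `&` X0 T = K.
Proof.
move=> isoK Kmax; apply/seteqP; split=> [x [TKx X0x] | x Kx].
- exact: Kmax (isotropic_setU1 isoK TKx X0x).
- by split; [exact: isoK | exact: isotropic_sub_X0 isoK _ Kx].
Qed.

End QuasiInvolution.

Theorem theorem1p4 (X : Type) (T : set X -> set X) :
  order_reversing_quasi_involution T ->
  (forall K0 : set X, K0 `<=` T K0 ->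
     exists K : set X, K0 `<=` K /\ T K `&` X0 T = K) /\
  (X0 T = setT ->
     forall x0 : X, exists K : set X, K x0 /\ K = T K).
Proof.
move=> HT.
have fixpoint_above K0 (isoK0 : isotropic T K0) :
    exists K : set X, K0 `<=` K /\ T K `&` X0 T = K.
  have [K [K0K isoK Kmax]] := exists_maximal_isotropic HT isoK0.
  by exists K; split=> //; exact: maximal_isotropic_fixpoint.
split=> [|X0T x0]; first exact: fixpoint_above.
have [K [x0K TK]] : exists K : set X, [set x0] `<=` K /\ T K `&` X0 T = K.
  by apply: fixpoint_above => _ ->; have : X0 T x0 by rewrite X0T.
by exists K; split; [exact: x0K | rewrite -[LHS]TK X0T setIT].
Qed.
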